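(* Let $G$ be a finite abelian group and let $k \in \mathbb{N}$. (1) Let $B$ be a zero-sum sequence over $G$ with $\max\mathsf{L}(B)=k+1$ and let $U$ be a minimal zero-sum sequence over $G$ with $U \mid B$. Then $\max\mathsf{L}(U^{-1}B)\le k$. Moreover, $\max\mathsf{L}(U^{-1}B) = k$ if and only if there exists some factorization $\zeta$ of $B$ of length $k+1$ in which $U$ occurs as a factor. (2) Let $M$ be the minimum of $|U|$ over all minimal zero-sum sequences $U$ that divide some zero-sum sequence $B$ over $G$ with $\max\mathsf{L}(B)=k+1$ and $|B|=\mathsf{D}_{k+1}(G)$. Then $\mathsf{D}_{k+1}(G)\le \mathsf{D}_k(G) + M$. (3) For each $\ell \in \mathbb{N}$, $\mathsf{D}_{k+1}(G) \le \max \{\mathsf{D}_k(G) + \ell, \mathsf{s}_{\le \ell}(G)-1\}$. In particular, if $\mathsf{D}_k(G) \ge \eta(G) - 1 -\exp(G)$, then $\mathsf{D}_{k+1}(G)\le \mathsf{D}_k(G) +\exp(G)$.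
   Context: $G$ is written additively. A sequence over $G$ is an element of the free abelian monoid over $G$ (a finite unordered list of elements with repetitions); $|S|$ denotes its length; $T\mid S$ means $T$ is a subsequence, and then $T^{-1}S$ is the sequence of remaining terms. A zero-sum sequence has terms summing to $0$; a minimal zero-sum sequence is a non-empty zero-sum sequence with no proper non-empty zero-sum subsequence. A factorization of a zero-sum sequence $B$ is a formal unordered product of minimal zero-sum sequences whose product is $B$; its length is the number of factors; $\mathsf{L}(B)$ is the set of lengths of factorizations of $B$. $\mathsf{D}_k(G)$ is the smallest $\ell$ such that every sequence of length at least $\ell$ has $k$ disjoint non-empty zero-sum subsequences (equivalently, the maximal length of a zero-sum sequence $B$ with $\max\mathsf{L}(B)\le k$). For $\ell\in\mathbb{N}$, $\mathsf{s}_{\le \ell}(G)\in\mathbb{N}\cup\{\infty\}$ is the smallest $n$ such that every sequence over $G$ of length at least $n$ has a non-empty zero-sum subsequence of length at most $\ell$; $\eta(G)=\mathsf{s}_{\le\exp(G)}(G)$. *)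

(* Sequences over a finite abelian group G (finZmodType)
   are represented by lists seq G, considered up to permutation
   (elements of the free abelian monoid over G). *)
From mathcomp Require Import all_boot all_algebra all_fingroup all_solvable.
Set Implicit Arguments. Unset Strict Implicit. Unset Printing Implicit Defensive.
Import GRing.Theory.
Local Open Scope ring_scope.

Section Seqs.
Variable G : finZmodType.
Implicit Types S T U B C : seq G.

Definition seq_dvd T S : bool := [forall x : G, (count_mem x T <= count_mem x S)%N].

Definition seq_quot T S : seq G := foldr (fun x s => rem x s) S T.

Definition zero_sum S : bool := \sum_(x <- S) x == 0.

Definition minimal_zero_sum U : Prop :=
  [/\ (0 < size U)%N, zero_sum U &
      forall T, seq_dvd T U -> (0 < size T)%N -> zero_sum T -> size T = size U].

Definition factorization B (Z : seq (seq G)) : Prop :=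
  (forall V, V \in Z -> minimal_zero_sum V) /\ perm_eq (flatten Z) B.

Definition maxL_le B (k : nat) : Prop :=
  forall Z, factorization B Z -> (size Z <= k)%N.

Definition maxL_eq B (k : nat) : Prop :=
  (exists Z, factorization B Z /\ size Z = k) /\ maxL_le B k.

Definition has_disjoint_zs (k : nat) S : Prop :=
  exists Ts : seq (seq G), [/\ size Ts = k,
    forall T, T \in Ts -> (0 < size T)%N /\ zero_sum T &
    seq_dvd (flatten Ts) S].

Definition Dk_prop (k l : nat) : Prop :=
  forall S, (l <= size S)%N -> has_disjoint_zs k S.

Definition is_Dk (k n : nat) : Prop :=
  Dk_prop k n /\ forall l, Dk_prop k l -> (n <= l)%N.

Definition s_le_prop (l n : nat) : Prop :=
  forall S, (n <= size S)%N ->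
    exists T, [/\ seq_dvd T S, (0 < size T)%N, (size T <= l)%N & zero_sum T].

(* n = s_{<= l}(G) (a natural number; if s_{<= l}(G) = infinity, no n satisfies this) *)
Definition is_s_le (l n : nat) : Prop :=
  s_le_prop l n /\ forall m, s_le_prop l m -> (n <= m)%N.

Definition is_min_atom_len (j d M : nat) : Prop :=
  (exists B U, [/\ zero_sum B, maxL_eq B j, size B = d, minimal_zero_sum U &
                   seq_dvd U B /\ size U = M]) /\
  (forall B U, zero_sum B -> maxL_eq B j -> size B = d -> minimal_zero_sum U ->
     seq_dvd U B -> (M <= size U)%N).

End Seqs.

Definition expG (G : finZmodType) : nat := exponent [set: G].

From mathcomp Require Import all_boot all_algebra all_fingroup all_solvable.
From mathcomp Require Import zify.
From Stdlib Require Import Classical.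
Set Implicit Arguments. Unset Strict Implicit. Unset Printing Implicit Defensive.
Import GRing.Theory.

(* (1) Adjoining U to a factorization of U^{-1}B gives one of B, and removing
   U from a factorization of B that contains it gives one of U^{-1}B.
   (2) A zero-sum sequence with m disjoint non-empty zero-sum subsequences has
   a factorization of length at least m, and a zero-sum sequence longer than
   D_k(G) has k+1 of them: split off one term, apply D_k to the rest, and the
   leftover together with that term is zero-sum.  Hence |U^{-1}B| <= D_k(G).
   (3) Let |S| >= max(D_k + l, s_{<=l} - 1).  If |S| >= s_{<=l}, S has a
   zero-sum T with |T| <= l and D_k applies to T^{-1}S.  Otherwise S g with
   g = -sigma(S) has such a T; either T | S as before, or T = g T' and then
   T'^{-1}S is a zero-sum sequence longer than D_k. *)

Section ZeroSumSequences.
Variable G : finZmodType.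
Implicit Types S T U V B : seq G.

Lemma seq_dvdP T S :
  reflect (forall x, count_mem x T <= count_mem x S) (seq_dvd T S).
Proof. exact: forallP. Qed.

Lemma perm_seq_quot T S : seq_dvd T S -> perm_eq (T ++ seq_quot T S) S.
Proof.
elim: T => [|x T IH] /seq_dvdP dxTS //=.
have /IH permT : seq_dvd T S.
  by apply/seq_dvdP => y; have := dxTS y; rewrite /=; lia.
have x_quot : x \in seq_quot T S.
  rewrite -has_pred1 has_count; have := dxTS x.
  have /seq.permP/(_ (pred1 x)) := permT; rewrite /= count_cat eqxx; lia.
apply/seq.permP => p; rewrite -(seq.permP permT) /= !count_cat.
by rewrite (seq.permP (perm_to_rem x_quot)) /=; lia.
Qed.

Lemma seq_dvd_catl T R S : perm_eq (T ++ R) S -> seq_dvd T S.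
Proof. by move=> /seq.permP eqTRS; apply/seq_dvdP => x; rewrite -eqTRS count_cat leq_addr. Qed.

Lemma seq_dvd_trans T S R : seq_dvd T S -> seq_dvd S R -> seq_dvd T R.
Proof.
by move=> /seq_dvdP dTS /seq_dvdP dSR; apply/seq_dvdP => x; exact: leq_trans (dSR x).
Qed.

Lemma seq_dvd_quot T S : seq_dvd T S -> seq_dvd (seq_quot T S) S.
Proof. by move=> /perm_seq_quot; rewrite perm_catC; apply: seq_dvd_catl. Qed.

Lemma size_seq_quot T S : seq_dvd T S -> size T + size (seq_quot T S) = size S.
Proof. by move=> /perm_seq_quot/perm_size; rewrite size_cat. Qed.

Lemma zero_sum_perm S1 S2 : perm_eq S1 S2 -> zero_sum S1 = zero_sum S2.
Proof. by move=> eqS; rewrite /zero_sum (perm_big _ eqS). Qed.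

Lemma zero_sum_catl S1 S2 : zero_sum S1 -> zero_sum (S1 ++ S2) = zero_sum S2.
Proof. by rewrite /zero_sum big_cat /= => /eqP ->; rewrite add0r. Qed.

Lemma zero_sum_quot T S :
  seq_dvd T S -> zero_sum T -> zero_sum S -> zero_sum (seq_quot T S).
Proof. by move=> /perm_seq_quot/zero_sum_perm <- /zero_sum_catl ->. Qed.

Lemma zero_sum_flatten (Ts : seq (seq G)) :
  (forall T, T \in Ts -> zero_sum T) -> zero_sum (flatten Ts).
Proof.
elim: Ts => [|T Ts IH] zTs; first by rewrite /zero_sum big_nil.
have -> : flatten (T :: Ts) = T ++ flatten Ts by [].
rewrite zero_sum_catl; last by rewrite zTs ?mem_head.
by apply: IH => V V_Ts; rewrite zTs ?inE ?V_Ts ?orbT.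
Qed.

Lemma minimal_zero_sum_proper S :
  (0 < size S)%N -> zero_sum S -> ~ minimal_zero_sum S ->
  exists T, [/\ seq_dvd T S, (0 < size T)%N, (size T < size S)%N & zero_sum T].
Proof.
move=> S_gt0 zS notmin; apply: NNPP => noT; apply: notmin; split=> // T dTS T_gt0 zT.
have leTS : (size T <= size S)%N by rewrite -(size_seq_quot dTS) leq_addr.
apply/eqP; rewrite eqn_leq leTS /= leqNgt.
by apply/negP => ltTS; apply: noT; exists T.
Qed.

Lemma factorization_perm B C Z : perm_eq B C -> factorization B Z -> factorization C Z.
Proof. by move=> eqBC [minZ eqZB]; split=> //; apply: perm_trans eqBC. Qed.

Lemma factorization_atom U : minimal_zero_sum U -> factorization U [:: U].
Proof. by move=> minU; split=> [V|] /=; rewrite ?inE ?cats0 // => /eqP ->. Qed.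

Lemma factorization_cat B C Y Z :
  factorization B Y -> factorization C Z -> factorization (B ++ C) (Y ++ Z).
Proof.
move=> [minY eqYB] [minZ eqZC]; split; last by rewrite flatten_cat perm_cat.
by move=> V; rewrite mem_cat => /orP [/minY|/minZ].
Qed.

Lemma factorization_exists S : zero_sum S -> exists Z, factorization S Z.
Proof.
have [n] := ubnP (size S); elim: n S => // n IH S /ltnSE leSn zS.
have [/size0nil->|S_gt0] := posnP (size S); first by exists [::].
have [minS|notmin] := classic (minimal_zero_sum S).
  by exists [:: S]; apply: factorization_atom.
have [T [dTS T_gt0 ltTS zT]] := minimal_zero_sum_proper S_gt0 zS notmin.
have sizeS := size_seq_quot dTS.
have [Y fY] := IH T ltac:(lia) zT.
have [Z fZ] := IH (seq_quot T S) ltac:(lia) (zero_sum_quot dTS zT zS).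
by exists (Y ++ Z); apply: factorization_perm (perm_seq_quot dTS) (factorization_cat fY fZ).
Qed.

Lemma size_factorization_gt0 T Z :
  (0 < size T)%N -> factorization T Z -> (0 < size Z)%N.
Proof. by case: Z => [|//] T_gt0 [_ /perm_size]; case: T T_gt0. Qed.

Lemma factorization_flatten (Ts : seq (seq G)) :
  (forall T, T \in Ts -> (0 < size T)%N /\ zero_sum T) ->
  exists Z, factorization (flatten Ts) Z /\ (size Ts <= size Z)%N.
Proof.
elim: Ts => [|T Ts IH] zTs; first by exists [::].
have [T_gt0 zT] := zTs T (mem_head _ _).
have [Y fY] := factorization_exists zT.
have [|Z [fZ leZ]] := IH; first by move=> V V_Ts; apply: zTs; rewrite inE V_Ts orbT.
exists (Y ++ Z); split; first exact: factorization_cat.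
by have := size_factorization_gt0 T_gt0 fY; rewrite size_cat /=; lia.
Qed.

Lemma has_disjoint_zs_factorization m B :
  zero_sum B -> has_disjoint_zs m B ->
  exists Z, factorization B Z /\ (m <= size Z)%N.
Proof.
move=> zB [Ts [<- zTs dTsB]].
have [Y [fY leY]] := factorization_flatten zTs.
have zTs' : zero_sum (flatten Ts) by apply: zero_sum_flatten => T /zTs [].
have [Z fZ] := factorization_exists (zero_sum_quot dTsB zTs' zB).
exists (Y ++ Z); split; last by rewrite size_cat; lia.
exact: factorization_perm (perm_seq_quot dTsB) (factorization_cat fY fZ).
Qed.

Lemma has_disjoint_zs_dvd m R S :
  has_disjoint_zs m R -> seq_dvd R S -> has_disjoint_zs m S.
Proof. by move=> [Ts [? ? dTsR]] dRS; exists Ts; split=> //; apply: seq_dvd_trans dRS. Qed.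

Lemma has_disjoint_zs_cons m T S :
  seq_dvd T S -> (0 < size T)%N -> zero_sum T ->
  has_disjoint_zs m (seq_quot T S) -> has_disjoint_zs m.+1 S.
Proof.
move=> dTS T_gt0 zT [Ts [sizeTs zTs dTs]]; exists (T :: Ts); split=> /=.
- by rewrite sizeTs.
- by move=> V; rewrite inE => /orP [/eqP ->|/zTs].
apply/seq_dvdP => x; rewrite -(seq.permP (perm_seq_quot dTS)) !count_cat leq_add2l.
by move/seq_dvdP: dTs.
Qed.

Lemma Dk_prop_zero_sum k dk B :
  Dk_prop G k dk -> zero_sum B -> (dk < size B)%N -> has_disjoint_zs k.+1 B.
Proof.
case: B => [//|g B] Dk zB /ltnSE /Dk [Ts [sizeTs zTs dTsB]].
set W := seq_quot (flatten Ts) B.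
have eqB : perm_eq (flatten Ts ++ (g :: W)) (g :: B).
  by rewrite perm_catC /= perm_cons perm_catC perm_seq_quot.
have zTs' : zero_sum (flatten Ts) by apply: zero_sum_flatten => T /zTs [].
have zgW : zero_sum (g :: W) by move: zB; rewrite -(zero_sum_perm eqB) zero_sum_catl.
exists ((g :: W) :: Ts); split=> /=.
- by rewrite sizeTs.
- by move=> T; rewrite inE => /orP [/eqP ->|/zTs].
by apply: (seq_dvd_catl (R := [::])); rewrite cats0 -cat_cons perm_catC.
Qed.

Lemma size_maxL_le k dk B :
  Dk_prop G k dk -> zero_sum B -> maxL_le B k -> (size B <= dk)%N.
Proof.
move=> Dk zB maxB; rewrite leqNgt; apply/negP => /(Dk_prop_zero_sum Dk zB).
by move=> /(has_disjoint_zs_factorization zB) [Z [/maxB]]; lia.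
Qed.

Lemma Dk_prop_short_zero_sum k dk T S :
  Dk_prop G k dk -> seq_dvd T S -> (0 < size T)%N -> zero_sum T ->
  (dk + size T <= size S)%N -> has_disjoint_zs k.+1 S.
Proof.
move=> Dk dTS T_gt0 zT leS; apply: (has_disjoint_zs_cons dTS T_gt0 zT).
by apply: Dk; have := size_seq_quot dTS; lia.
Qed.

Lemma zero_sum_dvd_of_neg_sum S T g :
  (g + \sum_(x <- S) x = 0)%R -> seq_dvd T (g :: S) -> zero_sum T -> g \in T ->
  exists2 R, seq_dvd R S & zero_sum R /\ (size T + size R = (size S).+1)%N.
Proof.
move=> gS /seq_dvdP dT zT gT; have eqT := perm_to_rem gT.
have dT' : seq_dvd (rem g T) S.
  by apply/seq_dvdP => x; have := dT x; rewrite (seq.permP eqT) /=; lia.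
exists (seq_quot (rem g T) S); first exact: seq_dvd_quot.
split; last by rewrite (perm_size eqT) /= addSn size_seq_quot.
move: gS zT; rewrite /zero_sum (perm_big _ eqT) big_cons.
rewrite -(perm_big _ (perm_seq_quot dT')) big_cat /= addrA => + /eqP ga.
by rewrite ga add0r => ->.
Qed.

Lemma Dk_prop_succ_s_le k dk l s :
  Dk_prop G k dk -> s_le_prop G l s -> Dk_prop G k.+1 (maxn (dk + l) s.-1).
Proof.
move=> Dk sl S; rewrite geq_max => /andP [leS1 leS2].
have [leS3|ltS] := leqP s (size S).
  have [T [dTS T_gt0 leT zT]] := sl S leS3.
  by apply: (Dk_prop_short_zero_sum Dk dTS T_gt0 zT); lia.
pose g := (- \sum_(x <- S) x)%R.
have gS : (g + \sum_(x <- S) x = 0)%R by rewrite addNr.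
have [T [dT T_gt0 leT zT] ] := sl (g :: S) ltac:(rewrite /=; lia).
have [gT|gNT] := boolP (g \in T); last first.
  apply: (Dk_prop_short_zero_sum Dk _ T_gt0 zT); last lia.
  apply/seq_dvdP => x; move/seq_dvdP: dT => /(_ x) /=.
  by case: eqVneq => [<-|]; rewrite ?(count_memPn gNT).
have [R dRS [zR sizeR]] := zero_sum_dvd_of_neg_sum gS dT zT gT.
by apply: has_disjoint_zs_dvd dRS; apply: (Dk_prop_zero_sum Dk zR); lia.
Qed.

Lemma factorization_cons_quot U B Z :
  minimal_zero_sum U -> seq_dvd U B -> factorization (seq_quot U B) Z ->
  factorization B (U :: Z).
Proof.
move=> minU dUB fZ.
exact: factorization_perm (perm_seq_quot dUB) (factorization_cat (factorization_atom minU) fZ).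
Qed.

Lemma maxL_le_quot k B U :
  maxL_le B k.+1 -> minimal_zero_sum U -> seq_dvd U B -> maxL_le (seq_quot U B) k.
Proof.
by move=> maxB minU dUB Z /(factorization_cons_quot minU dUB) /maxB.
Qed.

Lemma maxL_eq_quot k B U :
  maxL_eq B k.+1 -> minimal_zero_sum U -> seq_dvd U B ->
  maxL_eq (seq_quot U B) k <->
    exists Z, [/\ factorization B Z, size Z = k.+1 & has (perm_eq U) Z].
Proof.
move=> [_ maxB] minU dUB; split.
  move=> [[Z [fZ <-]] _]; exists (U :: Z); split; rewrite /= ?perm_refl //.
  exact: factorization_cons_quot.
move=> [Z [[minZ eqZB] sizeZ /hasP [V V_Z eqUV]]].
split; last exact: maxL_le_quot.
exists (rem V Z); split; last by rewrite size_rem // sizeZ.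
split; first by move=> W /mem_rem /minZ.
rewrite -(perm_cat2l U); apply: perm_trans (perm_cat eqUV (perm_refl _)) _.
apply: perm_trans (perm_trans (_ : perm_eq _ (flatten Z)) eqZB) _.
  by apply: (perm_flatten (ss1 := V :: rem V Z)); rewrite perm_sym perm_to_rem.
by rewrite perm_sym perm_seq_quot.
Qed.

Lemma Dk_succ_le_add_atom k dk dk1 M :
  is_Dk G k dk -> is_min_atom_len G k.+1 dk1 M -> (dk1 <= dk + M)%N.
Proof.
move=> [Dk _] [[B [U [zB [_ maxB] <- minU [dUB <-]]]] _].
have [_ zU _] := minU.
have := size_maxL_le Dk (zero_sum_quot dUB zU zB) (maxL_le_quot maxB minU dUB).
by have := size_seq_quot dUB; lia.
Qed.

End ZeroSumSequences.

Theorem proposition3p1 (G : finZmodType) (k : nat) (hk : (1 <= k)%N) :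
  (* (1) *)
  (forall B U : seq G, zero_sum B -> maxL_eq B k.+1 -> minimal_zero_sum U ->
     seq_dvd U B ->
     maxL_le (seq_quot U B) k /\
     (maxL_eq (seq_quot U B) k <->
        exists Z, [/\ factorization B Z, size Z = k.+1 & has (perm_eq U) Z]))
  /\
  (* (2) *)
  (forall dk dk1 M : nat, is_Dk G k dk -> is_Dk G k.+1 dk1 ->
     is_min_atom_len G k.+1 dk1 M -> (dk1 <= dk + M)%N)
  /\
  (* (3) *)
  (forall dk dk1 : nat, is_Dk G k dk -> is_Dk G k.+1 dk1 ->
     (forall l s : nat, (1 <= l)%N -> is_s_le G l s -> (dk1 <= maxn (dk + l) s.-1)%N)
     /\
     (forall eta : nat, is_s_le G (expG G) eta -> (eta <= dk + 1 + expG G)%N ->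
        (dk1 <= dk + expG G)%N)).
Proof.
split.
  move=> B U _ maxB minU dUB; split; first exact: maxL_le_quot maxB.2 minU dUB.
  exact: maxL_eq_quot.
split; first by move=> dk dk1 M Dk _; apply: Dk_succ_le_add_atom.
move=> dk dk1 [Dk _] [_ minDk1].
have Dk1_le l s : is_s_le G l s -> (dk1 <= maxn (dk + l) s.-1)%N.
  by move=> [sl _]; apply/minDk1/Dk_prop_succ_s_le.
split=> [l s _|eta /Dk1_le le_dk1 le_eta]; first exact: Dk1_le.
by apply: leq_trans le_dk1 _; rewrite geq_max leqnn /=; lia.
Qed.
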